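(* Let $K\ge2$, $0<q<p$ with $p+(K-1)q=1$, $\phi\in\Delta$ with $\phi_1\le\cdots\le\phi_K$, and $n\in\{0,\dots,K-1\}$. Let $g(n)=(1-nq)\phi_{n+1}-q\sum_{i>n}\phi_i$. Then: (a) $\theta^{[n]}\in\Delta$ if and only if $g(n)\ge0$; (b) for $n>0$, if $\theta^{[n-1]}\in\Delta$ then $\theta^{[n]}\in\Delta$; (c) for $n>0$, if $\theta^{[n-1]}\in\Delta$ then $\lambda^{[n-1]}\ge\lambda^{[n]}$; (d) for $n>0$, if $\phi_{n+1}=\phi_n$ then $g(n)=g(n-1)$; (e) for $n>0$, if $g(n-1)=0$ then $\theta^{[n-1]}=\theta^{[n]}$.
   Context: $\Delta=\{\theta\in\mathbb{R}^K:\theta_i\ge0,\sum_i\theta_i=1\}$. For sorted $\phi$ and $n\in\{0,\dots,K-1\}$: $\lambda^{[n]}=\frac{(p-q)\sum_{i>n}\phi_i}{1-nq}$, and $\theta^{[n]}\in\mathbb{R}^K$ is given by $\theta^{[n]}_i=0$ for $i\le n$ and $\theta^{[n]}_i=\frac{\phi_i}{\lambda^{[n]}}-\frac{q}{p-q}$ for $i>n$ (its entries sum to 1 but may be negative). *)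

(* Indices 1..K of the paper are the ordinals 0..K-1 of 'I_K:
   paper index i  <->  ordinal with value i-1. *)
From HB Require Import structures.
From mathcomp Require Import all_boot all_order all_algebra.
Set Implicit Arguments. Unset Strict Implicit. Unset Printing Implicit Defensive.
Import Order.TTheory GRing.Theory Num.Theory.
Local Open Scope ring_scope.

Section Defs.
Variables (R : realFieldType) (K : nat).

Definition in_simplex (th : 'I_K -> R) : Prop :=
  (forall i, 0 <= th i) /\ \sum_(i < K) th i = 1.

(* phi_{k+1} in the paper's 1-based notation = entry with 0-based index k
   (default 0 out of range; only used for k < K) *)
Definition phi_at (phi : 'I_K -> R) (k : nat) : R :=
  if @insub nat (fun j => (j < K)%N) 'I_K k is Some i then phi i else 0.

(* sum_{i > n} phi_i (paper, 1-based) = sum over 0-based indices i >= n *)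
Definition tail_sum (phi : 'I_K -> R) (n : nat) : R :=
  \sum_(i < K | (n <= i)%N) phi i.

Definition lam (p q : R) (phi : 'I_K -> R) (n : nat) : R :=
  (p - q) * tail_sum phi n / (1 - n%:R * q).

(* theta^{[n]} : zero on paper indices i <= n (0-based i < n) *)
Definition theta (p q : R) (phi : 'I_K -> R) (n : nat) : 'I_K -> R :=
  fun i => if (i < n)%N then 0 else phi i / lam p q phi n - q / (p - q).

Definition gfun (q : R) (phi : 'I_K -> R) (n : nat) : R :=
  (1 - n%:R * q) * phi_at phi n - q * tail_sum phi n.

End Defs.

(* With T_n the tail sum and a_n := 1 - n q, the entries of theta^[n] beyond n are
   (a_n phi_i - q T_n) / ((p - q) T_n): increasing in phi_i, so theta^[n] is in the
   simplex iff its first nonzero entry g(n) / ((p - q) T_n) is nonnegative, the sum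
   being 1 because a_n - (K - n) q = p - q.  Splitting T_n = phi_{n+1} + T_{n+1} gives
     g(n) - g(n-1) = a_n (phi_{n+1} - phi_n)  and
     lambda^[n-1] - lambda^[n] = (p - q) g(n-1) / (a_{n-1} a_n),
   from which (b)-(e) follow. *)
From HB Require Import structures.
From mathcomp Require Import all_boot all_order all_algebra.
From mathcomp Require Import ring lra zify.
From Stdlib Require Import FunctionalExtensionality.
Set Implicit Arguments. Unset Strict Implicit. Unset Printing Implicit Defensive.
Import Order.TTheory GRing.Theory Num.Theory.
Local Open Scope ring_scope.

Section Tails.
Context {R : realFieldType} {K : nat} {phi : 'I_K -> R}.

Lemma phi_atE k (hk : (k < K)%N) : phi_at phi k = phi (Ordinal hk).
Proof.
rewrite /phi_at; case: insubP => [i _ /= ei|]; last by rewrite hk.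
by congr phi; apply: val_inj.
Qed.

Lemma tail_sumS m : (m < K)%N -> tail_sum phi m = phi_at phi m + tail_sum phi m.+1.
Proof.
move=> hm; rewrite /tail_sum (bigD1 (Ordinal hm)) //= (phi_atE hm); congr (_ + _).
apply: eq_bigl => -[i hi]; rewrite -(inj_eq val_inj) /=.
by case: ltngtP.
Qed.

Lemma gfunS q m : (m < K)%N ->
  gfun q phi m.+1 = gfun q phi m + (1 - m.+1%:R * q) * (phi_at phi m.+1 - phi_at phi m).
Proof. by move=> hm; rewrite /gfun (tail_sumS hm) -natr1; ring. Qed.

Hypothesis phi_simplex : in_simplex phi.
Hypothesis phi_sorted : forall i j : 'I_K, (i <= j)%N -> phi i <= phi j.

Lemma tail_sum_gt0 n : (n < K)%N -> 0 < tail_sum phi n.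
Proof.
move=> hn; have [phi_ge0 sum_phi] := phi_simplex.
have hl : (K.-1 < K)%N by lia.
set l := Ordinal hl.
have phi_le_l i : phi i <= phi l by apply: phi_sorted; case: i => /= i; lia.
have sum_le : 1 <= K%:R * phi l.
  rewrite mulr_natl -sum_phi -[K in _ *+ K]card_ord -sumr_const.
  by apply: ler_sum => i _.
have K_gt0 : (0 : R) < K%:R by rewrite ltr0n; lia.
have phi_l_gt0 : 0 < phi l by nra.
rewrite /tail_sum (bigD1 l) /=; last by lia.
by rewrite ltr_pwDl // sumr_ge0.
Qed.

End Tails.

Section Theta.
Variables (R : realFieldType) (K : nat) (p q : R) (phi : 'I_K -> R).
Hypotheses (q_gt0 : 0 < q) (q_lt_p : q < p) (pqK : p + (K.-1)%:R * q = 1).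
Hypothesis phi_simplex : in_simplex phi.
Hypothesis phi_sorted : forall i j : 'I_K, (i <= j)%N -> phi i <= phi j.

Lemma lam_denom_gt0 n : (n < K)%N -> 0 < 1 - n%:R * q.
Proof.
move=> hn; have : (n%:R : R) <= (K.-1)%:R by rewrite ler_nat; lia.
have := pqK; have := q_lt_p; have := q_gt0; nra.
Qed.

Lemma theta_tailE n (i : 'I_K) : (n < K)%N -> (n <= i)%N ->
  theta p q phi n i = ((1 - n%:R * q) * phi i - q * tail_sum phi n)
                      / ((p - q) * tail_sum phi n).
Proof.
move=> hn hi; rewrite /theta ltnNge hi /= /lam.
have hpq : 0 < p - q by rewrite subr_gt0.
have hT := tail_sum_gt0 phi_simplex phi_sorted hn.
have ha := lam_denom_gt0 hn.
by field; rewrite !lt0r_neq0.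
Qed.

Lemma theta_firstE n (hn : (n < K)%N) :
  theta p q phi n (Ordinal hn) = gfun q phi n / ((p - q) * tail_sum phi n).
Proof. by rewrite theta_tailE // /gfun (phi_atE hn). Qed.

Lemma sum_theta n : (n < K)%N -> \sum_(i < K) theta p q phi n i = 1.
Proof.
move=> hn.
have -> : \sum_(i < K) theta p q phi n i =
          \sum_(i < K | (n <= i)%N) (phi i / lam p q phi n - q / (p - q)).
  by rewrite [RHS]big_mkcond; apply: eq_bigr => i _; rewrite /theta ltnNge; case: leqP.
rewrite sumrB -mulr_suml -/(tail_sum phi n).
have -> : \sum_(i < K | (n <= i)%N) (q / (p - q)) = q / (p - q) *+ (K - n).
  by rewrite -sumr_const_nat big_geq_mkord; apply: eq_bigl.
rewrite -mulr_natr natrB ?(ltnW hn) //.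
have hpq : 0 < p - q by rewrite subr_gt0.
have hT := tail_sum_gt0 phi_simplex phi_sorted hn.
have ha := lam_denom_gt0 hn.
have K1 : (K.-1)%:R = K%:R - 1 :> R by rewrite -subn1 natrB //; lia.
have pqK' := pqK; rewrite K1 in pqK'.
have numer : (1 - n%:R * q) - q * (K%:R - n%:R) = p - q by lra.
transitivity ((1 - n%:R * q - q * (K%:R - n%:R)) / (p - q)).
  by rewrite /lam; field; rewrite !lt0r_neq0.
by rewrite numer divff // lt0r_neq0.
Qed.

Lemma theta_simplexP n : (n < K)%N ->
  in_simplex (theta p q phi n) <-> 0 <= gfun q phi n.
Proof.
move=> hn; have hT := tail_sum_gt0 phi_simplex phi_sorted hn.
have den_gt0 : 0 < (p - q) * tail_sum phi n by rewrite mulr_gt0 ?subr_gt0.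
split=> [[theta_ge0 _] | g_ge0].
  by have := theta_ge0 (Ordinal hn); rewrite theta_firstE pmulr_lge0 ?invr_gt0.
split; last exact: sum_theta.
move=> i; case: (ltnP i n) => hi; first by rewrite /theta hi.
rewrite theta_tailE // divr_ge0 ?(ltW den_gt0) //.
apply: (le_trans g_ge0); rewrite /gfun (phi_atE hn) lerD2r.
by rewrite ler_wpM2l ?phi_sorted // ltW ?lam_denom_gt0.
Qed.

Lemma lamB_succ m : (m.+1 < K)%N ->
  lam p q phi m - lam p q phi m.+1
  = (p - q) * gfun q phi m / ((1 - m%:R * q) * (1 - m.+1%:R * q)).
Proof.
move=> hm; have := lam_denom_gt0 hm; have := lam_denom_gt0 (ltnW hm).
rewrite /lam /gfun (tail_sumS (ltnW hm)) -natr1 => ha ha'.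
by field; rewrite !lt0r_neq0.
Qed.

Lemma theta_succ_eq m : (m.+1 < K)%N -> gfun q phi m = 0 ->
  theta p q phi m = theta p q phi m.+1.
Proof.
move=> hm g0; have hm' := ltnW hm.
have lam_eq : lam p q phi m = lam p q phi m.+1.
  by apply/eqP; rewrite -subr_eq0 lamB_succ // g0 mulr0 mul0r.
apply: functional_extensionality => i.
case: (ltngtP i m) => [him | hmi | him].
- by rewrite /theta him ltnW.
- by rewrite /theta ltnNge (ltnW hmi) ltnNge hmi /= lam_eq.
- have -> : i = Ordinal hm' by exact: val_inj.
  by rewrite theta_firstE g0 mul0r /theta ltnSn.
Qed.

End Theta.

Theorem lemma3 (R : realFieldType) (K : nat) (p q : R) (phi : 'I_K -> R) (n : nat) :
  (2 <= K)%N -> 0 < q -> q < p -> p + (K.-1)%:R * q = 1 ->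
  in_simplex phi -> (forall i j : 'I_K, (i <= j)%N -> phi i <= phi j) ->
  (n < K)%N ->
  [/\ (in_simplex (theta p q phi n) <-> 0 <= gfun q phi n),
      ((0 < n)%N -> in_simplex (theta p q phi n.-1) -> in_simplex (theta p q phi n)),
      ((0 < n)%N -> in_simplex (theta p q phi n.-1) -> lam p q phi n <= lam p q phi n.-1),
      ((0 < n)%N -> phi_at phi n = phi_at phi n.-1 -> gfun q phi n = gfun q phi n.-1)
    & ((0 < n)%N -> gfun q phi n.-1 = 0 -> theta p q phi n.-1 = theta p q phi n)].
Proof.
move=> _ q_gt0 q_lt_p pqK simplex sorted hn.
have simplexP := theta_simplexP q_gt0 q_lt_p pqK simplex sorted.
split; first exact: simplexP.
all: case: n hn => [|m] hn //= _; have hm : (m < K)%N by lia.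
all: have ha := lam_denom_gt0 q_gt0 q_lt_p pqK hn.
all: have ha' := lam_denom_gt0 q_gt0 q_lt_p pqK hm.
- move=> /(simplexP _ hm) g_ge0; apply/(simplexP _ hn).
  rewrite gfunS // addr_ge0 // mulr_ge0 ?(ltW ha) // subr_ge0.
  by rewrite (phi_atE hm) (phi_atE hn) sorted.
- move=> /(simplexP _ hm) g_ge0.
  have hpq : 0 <= p - q by rewrite subr_ge0 ltW.
  by rewrite -subr_ge0 lamB_succ // divr_ge0 ?mulr_ge0 // ltW ?mulr_gt0.
- by move=> e; rewrite gfunS // e subrr mulr0 addr0.
- exact: theta_succ_eq.
Qed.
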